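(* Let $M^Q(a|x)$ and $N^{Q'}(b|y)$ be any two simple PMDs, possibly on different Hilbert spaces $\mathcal{H}^Q$, $\mathcal{H}^{Q'}$ and with arbitrary finite program and outcome sets. Then both $M^Q(a|x)\succeq N^{Q'}(b|y)$ and $N^{Q'}(b|y)\succeq M^Q(a|x)$ hold.
   Context: All Hilbert spaces are finite-dimensional and all alphabets are finite. A PMD on $\mathcal{H}^Q$ with program set $\mathcal{X}$ and outcome set $\mathcal{A}$ is a family $\{M^Q(a|x)\}$ of operators on $\mathcal{H}^Q$ with $M^Q(a|x)\ge0$ and $\sum_a M^Q(a|x)=\mathbb{1}^Q$ for every $x$. A PMD is simple (i.e. a compatible family of POVMs) if there exist a POVM $\{\tilde M^Q(i)\}_{i\in\mathcal{I}}$ on $\mathcal{H}^Q$ and a conditional probability distribution $p(a|i,x)$ with $M^Q(a|x)=\sum_i p(a|i,x)\tilde M^Q(i)$ for all $a,x$. $M^Q(a|x)\succeq N^{Q'}(b|y)$ means that there exist a probability distribution $\mu(r)$, for each $r$ a quantum instrument $\{\mathcal{E}^{Q'\to Q}_{i|r}\}_i$, and conditional probability distributions $p(x|i,y,r)$, $q(b|a,x,i,y,r)$ such that for all $b,y$ \[N^{Q'}(b|y)=\sum_r\mu(r)\sum_{i,x,a}q(b|a,x,i,y,r)\,p(x|i,y,r)\,(\mathcal{E}^{Q'\to Q}_{i|r})^\dagger[M^Q(a|x)],\] with $\mathcal{E}^\dagger$ the adjoint (trace-dual) map. *)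

From HB Require Import structures.
From mathcomp Require Import all_boot all_order all_algebra all_field.
Set Implicit Arguments. Unset Strict Implicit. Unset Printing Implicit Defensive.
Import Order.TTheory GRing.Theory Num.Theory.
Local Open Scope ring_scope.

(* Operators on H^Q (dim d) are complex d x d matrices over algC. *)

Definition adjmx (m n : nat) (A : 'M[algC]_(m, n)) : 'M[algC]_(n, m) :=
  (map_mx Num.conj A)^T.

Definition psd (d : nat) (A : 'M[algC]_d) : Prop :=
  forall v : 'cV[algC]_d, 0 <= (adjmx v *m A *m v) ord0 ord0.

Definition is_prob (T : finType) (f : T -> algC) : Prop :=
  (forall t, 0 <= f t) /\ \sum_t f t = 1.

Definition is_POVM (d : nat) (I : finType) (F : I -> 'M[algC]_d) : Prop :=
  (forall i, psd (F i)) /\ \sum_i F i = 1%:M.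

(* PMD {M(a|x)} : M a x = M(a|x) *)
Definition is_PMD (d : nat) (X A : finType) (M : A -> X -> 'M[algC]_d) : Prop :=
  (forall a x, psd (M a x)) /\ (forall x, \sum_a M a x = 1%:M).

Definition simple_PMD (d : nat) (X A : finType) (M : A -> X -> 'M[algC]_d) : Prop :=
  exists (I : finType) (F : I -> 'M[algC]_d) (p : A -> I -> X -> algC),
    is_POVM F /\ (forall i x, is_prob (fun a => p a i x)) /\
    (forall a x, M a x = \sum_i p a i x *: F i).

Definition is_linear_map (d1 d2 : nat) (E : 'M[algC]_d1 -> 'M[algC]_d2) : Prop :=
  forall (c : algC) (u v : 'M[algC]_d1), E (c *: u + v) = c *: E u + E v.

(* positivity of an n x n block matrix with d x d blocks B i j *)
Definition block_psd (n d : nat) (B : 'I_n -> 'I_n -> 'M[algC]_d) : Prop :=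
  forall v : 'I_n -> 'cV[algC]_d,
    0 <= \sum_i \sum_j (adjmx (v i) *m B i j *m v j) ord0 ord0.

(* complete positivity: id_n (x) E is positive for every n *)
Definition completely_positive (d1 d2 : nat) (E : 'M[algC]_d1 -> 'M[algC]_d2) : Prop :=
  forall (n : nat) (B : 'I_n -> 'I_n -> 'M[algC]_d1),
    block_psd B -> block_psd (fun i j => E (B i j)).

Definition is_instrument (d1 d2 : nat) (I : finType)
    (E : I -> 'M[algC]_d1 -> 'M[algC]_d2) : Prop :=
  (forall i, is_linear_map (E i) /\ completely_positive (E i)) /\
  (forall rho : 'M[algC]_d1, \tr (\sum_i E i rho) = \tr rho).

(* trace-dual (adjoint) map: tr(E^dag(M) rho) = tr(M E(rho)) *)
Definition dual_map (d1 d2 : nat) (E : 'M[algC]_d1 -> 'M[algC]_d2)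
    (M : 'M[algC]_d2) : 'M[algC]_d1 :=
  \matrix_(k, l) \tr (M *m E (delta_mx l k)).

Definition simulates (d d' : nat) (X A Y B : finType)
    (M : A -> X -> 'M[algC]_d) (N : B -> Y -> 'M[algC]_d') : Prop :=
  exists (R : finType) (mu : R -> algC) (I : finType)
         (E : R -> I -> 'M[algC]_d' -> 'M[algC]_d)
         (p : X -> I -> Y -> R -> algC)
         (q : B -> A -> X -> I -> Y -> R -> algC),
    is_prob mu /\
    (forall r, is_instrument (E r)) /\
    (forall i y r, is_prob (fun x => p x i y r)) /\
    (forall a x i y r, is_prob (fun b => q b a x i y r)) /\
    (forall b y, N b y =
       \sum_r mu r *: \sum_i \sum_x \sum_a
          (q b a x i y r * p x i y r) *: dual_map (E r i) (M a x)).

From mathcomp Require Import all_boot all_order all_algebra all_field.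
From mathcomp Require Import ring sesquilinear spectral.
Set Implicit Arguments. Unset Strict Implicit. Unset Printing Implicit Defensive.
Import Order.TTheory GRing.Theory Num.Theory.
Local Open Scope ring_scope.

(* A simple PMD N(b|y) = sum_j p(b|j,y) G_j is a classical post-processing of
   the single POVM {G_j}, so any PMD M simulates it: apply the measure-and-prepare
   instrument rho |-> tr(G_j rho) S with S = |0><0|, run M on a fixed program x0,
   ignore its outcome and output b with probability p(b|j,y).  Dually,
   sum_a E_j^dag(M(a|x0)) = tr(S) G_j = G_j.  The instrument is completely
   positive because G_j and S both split into rank-one terms w w^dag (spectral
   theorem), which turns its block form into a sum of block forms of the input. *)

Lemma adjmxE m n (A : 'M[algC]_(m, n)) : adjmx A = (A ^t* )%sesqui.
Proof. by rewrite /adjmx map_trmx. Qed.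

Lemma adjmxK m n (A : 'M[algC]_(m, n)) : adjmx (adjmx A) = A.
Proof. by apply/matrixP=> i j; rewrite !mxE conjCK. Qed.

Lemma adjmx_mul m n p (A : 'M[algC]_(m, n)) (B : 'M_(n, p)) :
  adjmx (A *m B) = adjmx B *m adjmx A.
Proof. by rewrite /adjmx map_mxM trmx_mul. Qed.

Lemma adjmxD m n (A B : 'M[algC]_(m, n)) : adjmx (A + B) = adjmx A + adjmx B.
Proof. by apply/matrixP=> i j; rewrite !mxE rmorphD. Qed.

Lemma adjmxZ m n c (A : 'M[algC]_(m, n)) : adjmx (c *: A) = c^* *: adjmx A.
Proof. by apply/matrixP=> i j; rewrite !mxE rmorphM. Qed.

Lemma adjmx_delta m n (i : 'I_m) (j : 'I_n) :
  adjmx (delta_mx i j : 'M[algC]_(m, n)) = delta_mx j i.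
Proof. by apply/matrixP=> k l; rewrite !mxE rmorph_nat andbC. Qed.

Definition mxform n (u : 'cV[algC]_n) (A : 'M_n) (v : 'cV_n) : algC :=
  (adjmx u *m A *m v) 0 0.

Lemma mxformDl n (u u' v : 'cV[algC]_n) A :
  mxform (u + u') A v = mxform u A v + mxform u' A v.
Proof. by rewrite /mxform adjmxD !mulmxDl mxE. Qed.

Lemma mxformDr n (u v v' : 'cV[algC]_n) A :
  mxform u A (v + v') = mxform u A v + mxform u A v'.
Proof. by rewrite /mxform !mulmxDr mxE. Qed.

Lemma mxformZl n c (u v : 'cV[algC]_n) A : mxform (c *: u) A v = c^* * mxform u A v.
Proof. by rewrite /mxform adjmxZ -!scalemxAl mxE. Qed.

Lemma mxformZr n c (u v : 'cV[algC]_n) A : mxform u A (c *: v) = c * mxform u A v.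
Proof. by rewrite /mxform -!scalemxAr mxE. Qed.

Lemma mxformBmx n (u v : 'cV[algC]_n) A B :
  mxform u (A - B) v = mxform u A v - mxform u B v.
Proof. by rewrite /mxform mulmxBr mulmxBl !mxE. Qed.

Lemma mxform_delta n (A : 'M[algC]_n) i j : mxform (delta_mx i 0) A (delta_mx j 0) = A i j.
Proof. by rewrite /mxform adjmx_delta -rowE -colE !mxE. Qed.

Lemma mxform_adj n (u v : 'cV[algC]_n) A : mxform u (adjmx A) v = (mxform v A u)^*.
Proof.
have -> : (mxform v A u)^* = adjmx (adjmx v *m A *m u) 0 0.
  by rewrite [RHS]mxE [RHS]mxE.
by rewrite !adjmx_mul adjmxK mulmxA.
Qed.

Lemma mxform_eq0 n (A : 'M[algC]_n) : (forall v, mxform v A v = 0) -> A = 0.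
Proof.
move=> A0; apply/matrixP=> i j; rewrite mxE.
pose e k : 'cV[algC]_n := delta_mx k 0.
have polar c : mxform (e i + c *: e j) A (e i + c *: e j) = c * A i j + c^* * A j i.
  rewrite mxformDl !mxformDr !mxformZl !mxformZr !mxform_delta.
  by rewrite -[A i i]mxform_delta -[A j j]mxform_delta !A0; ring.
have := polar 1; have := polar 'i; rewrite !A0 conjCi rmorph1 !mul1r => hi h1.
have : 'i * A i j *+ 2 = 0.
  rewrite mulr2n; transitivity ('i * (A i j + A j i) + ('i * A i j + - 'i * A j i)).
    by ring.
  by rewrite -h1 -hi; ring.
by move/eqP; rewrite mulrn_eq0 /= mulf_eq0 (negbTE (neq0Ci _)) => /eqP.
Qed.

Lemma psd_adjmx n (A : 'M[algC]_n) : psd A -> adjmx A = A.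
Proof.
move=> psdA; apply/eqP; rewrite -subr_eq0; apply/eqP/mxform_eq0 => v.
by rewrite mxformBmx mxform_adj conj_Creal ?subrr // ger0_real // psdA.
Qed.

Definition psd_factor n (G : 'M[algC]_n) (k : 'I_n) : 'cV_n :=
  sqrtC (spectral_diag G 0 k) *: (adjmx (spectralmx G) *m delta_mx k 0).

Section PsdFactor.
Variables (n : nat) (G : 'M[algC]_n).
Hypothesis psdG : psd G.
Let P := spectralmx G.
Let D := spectral_diag G.

Lemma spectralmx_mul_adj : P *m adjmx P = 1%:M.
Proof. by rewrite adjmxE; apply/unitarymxP/spectral_unitarymx. Qed.

Lemma psd_spectralE : G = adjmx P *m diag_mx D *m P.
Proof.
have normalG : G \is normalmx by apply/normalmxP; rewrite -adjmxE psd_adjmx.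
by rewrite adjmxE -invmx_unitary ?spectral_unitarymx //; apply/orthomx_spectralP.
Qed.

Lemma psd_spectral_diag_ge0 k : 0 <= D 0 k.
Proof.
have := psdG (adjmx P *m delta_mx k 0).
rewrite psd_spectralE adjmx_mul adjmxK adjmx_delta !mulmxA.
rewrite -(mulmxA _ P) spectralmx_mul_adj mulmx1 -(mulmxA _ P) spectralmx_mul_adj mulmx1.
by rewrite -rowE -colE !mxE eqxx mulr1n.
Qed.

Lemma psd_factorE : G = \sum_k psd_factor G k *m adjmx (psd_factor G k).
Proof.
rewrite [LHS]psd_spectralE diag_mx_sum_delta mulmx_sumr mulmx_suml.
apply: eq_bigr => k _; rewrite /psd_factor -/P -/D adjmxZ adjmx_mul adjmxK adjmx_delta.
rewrite -!scalemxAl -!scalemxAr scalerA.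
rewrite (conj_Creal (sqrtC_real (psd_spectral_diag_ge0 k))) -expr2 sqrtCK.
by rewrite !mulmxA -(mulmxA _ (delta_mx k 0)) mul_delta_mx -scalemxAl.
Qed.

End PsdFactor.

Lemma mxtrace_mul_delta (R : comPzRingType) n (G : 'M[R]_n) k l :
  \tr (G *m delta_mx l k) = G k l.
Proof.
rewrite -(mul_delta_mx (0 : 'I_1)) mulmxA -colE mxtrace_mulC -rowE trace_mx11.
by rewrite !mxE.
Qed.

Lemma mxtrace_psd_mul n (G B : 'M[algC]_n) : psd G ->
  \tr (G *m B) = \sum_k mxform (psd_factor G k) B (psd_factor G k).
Proof.
move=> psdG; rewrite {1}(psd_factorE psdG) mulmx_suml raddf_sum; apply: eq_bigr => k _.
by rewrite /= -mulmxA mxtrace_mulC trace_mx11.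
Qed.

Lemma mxform_rank1 n (u w v : 'cV[algC]_n) :
  mxform u (w *m adjmx w) v = ((adjmx w *m u) 0 0)^* * (adjmx w *m v) 0 0.
Proof.
rewrite /mxform !mulmxA -(mulmxA _ _ v) mxE big_ord1; congr (_ * _).
by rewrite -[w in LHS]adjmxK -adjmx_mul [LHS]mxE [LHS]mxE.
Qed.

Lemma mxform_psd n (u v : 'cV[algC]_n) (S : 'M_n) : psd S ->
  mxform u S v = \sum_l ((adjmx (psd_factor S l) *m u) 0 0)^* *
                        (adjmx (psd_factor S l) *m v) 0 0.
Proof.
move=> psdS; rewrite {1}(psd_factorE psdS) /mxform mulmx_sumr mulmx_suml summxE.
by apply: eq_bigr => l _; apply: mxform_rank1.
Qed.

Lemma psd_rank1 n (w : 'cV[algC]_n) : psd (w *m adjmx w).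
Proof. by move=> v; rewrite -/(mxform _ _ _) mxform_rank1 mulrC mul_conjC_ge0. Qed.

Lemma psd_delta n (i : 'I_n) : psd (delta_mx i i : 'M[algC]_n).
Proof.
by rewrite -(mul_delta_mx (0 : 'I_1)) -[delta_mx 0 i]adjmx_delta; apply: psd_rank1.
Qed.

Lemma mxtrace_delta (R : comPzRingType) n (i : 'I_n) : \tr (delta_mx i i : 'M[R]_n) = 1.
Proof. by rewrite -[delta_mx i i]mul1mx mxtrace_mul_delta mxE eqxx. Qed.

Definition measure_prepare n m (G : 'M[algC]_n) (S : 'M[algC]_m) (rho : 'M_n) : 'M_m :=
  \tr (G *m rho) *: S.

Section MeasurePrepare.
Variables (n m : nat) (G : 'M[algC]_n) (S : 'M[algC]_m).

Lemma measure_prepare_linear : is_linear_map (measure_prepare G S).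
Proof.
move=> c u v; rewrite /measure_prepare mulmxDr -scalemxAr mxtraceD mxtraceZ.
by rewrite scalerDl scalerA.
Qed.

Lemma measure_prepare_cp : psd G -> psd S -> completely_positive (measure_prepare G S).
Proof.
move=> psdG psdS k B psdB v.
pose w := psd_factor G; pose coef i l : algC := (adjmx (psd_factor S l) *m v i) 0 0.
have entryE i j : (adjmx (v i) *m measure_prepare G S (B i j) *m v j) 0 0 =
    \sum_p \sum_l mxform (coef i l *: w p) (B i j) (coef j l *: w p).
  rewrite /measure_prepare -scalemxAr -scalemxAl mxE -/(mxform _ _ _).
  rewrite mxtrace_psd_mul // mxform_psd // mulr_suml; apply: eq_bigr => p _.
  by rewrite mulr_sumr; apply: eq_bigr => l _; rewrite mxformZl mxformZr /coef /w; ring.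
under eq_bigr do under eq_bigr do rewrite entryE.
under eq_bigr do rewrite exchange_big.
rewrite exchange_big.
under eq_bigr do under eq_bigr do rewrite exchange_big.
under eq_bigr do rewrite exchange_big.
by apply: sumr_ge0 => p _; apply: sumr_ge0 => l _; apply: psdB.
Qed.

Lemma dual_measure_prepare (M : 'M[algC]_m) :
  dual_map (measure_prepare G S) M = \tr (M *m S) *: G.
Proof.
apply/matrixP=> k l; rewrite !mxE /measure_prepare -scalemxAr mxtraceZ.
by rewrite mxtrace_mul_delta mulrC.
Qed.

End MeasurePrepare.

Lemma measure_prepare_instrument n m (I : finType) (G : I -> 'M[algC]_n)
    (S : 'M[algC]_m) :
  is_POVM G -> psd S -> \tr S = 1 ->
  is_instrument (fun i => measure_prepare (G i) S).
Proof.
move=> [psdG sumG] psdS trS; split=> [i | rho].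
  by split; [apply: measure_prepare_linear | apply: measure_prepare_cp].
rewrite raddf_sum /=.
under eq_bigr do rewrite /measure_prepare mxtraceZ trS mulr1.
by rewrite -raddf_sum -mulmx_suml sumG mul1mx.
Qed.

Lemma is_prob_delta (T : finType) (t0 : T) : is_prob (fun t => (t == t0)%:R).
Proof.
split=> [t | ]; first exact: ler0n.
by rewrite (bigD1 t0) //= eqxx big1 ?addr0 // => t /negbTE ->.
Qed.

Lemma simulates_simple_PMD (d d' : nat) (X A Y B : finType)
    (M : A -> X -> 'M[algC]_d.+1) (N : B -> Y -> 'M[algC]_d') (x0 : X) :
  is_PMD M -> simple_PMD N -> simulates M N.
Proof.
move=> [_ sumM] [I [G [p [povmG [probp NE]]]]].
pose S : 'M[algC]_d.+1 := delta_mx 0 0.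
exists unit, (fun r => (r == tt)%:R), I, (fun _ i => measure_prepare (G i) S),
  (fun x _ _ _ => (x == x0)%:R), (fun b _ _ i y _ => p b i y).
split; first exact: is_prob_delta.
split.
  move=> _; apply: measure_prepare_instrument => //.
  - exact: psd_delta.
  - exact: mxtrace_delta.
split; first by move=> *; apply: is_prob_delta.
split; first by move=> *; apply: probp.
have dual_sumE i : \sum_a dual_map (measure_prepare (G i) S) (M a x0) = G i.
  under eq_bigr do rewrite dual_measure_prepare.
  by rewrite -scaler_suml -raddf_sum -mulmx_suml sumM mul1mx /= mxtrace_delta scale1r.
move=> b y; rewrite (big_pred1 tt) ?eqxx ?scale1r; last by case.
rewrite NE; apply: eq_bigr => i _.
rewrite (bigD1 x0) //= [X in _ + X]big1 ?addr0 => [|x /negbTE x_neq_x0].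
  by under eq_bigr do rewrite eqxx mulr1; rewrite -scaler_sumr dual_sumE.
by apply: big1 => a _; rewrite x_neq_x0 mulr0 scale0r.
Qed.

Theorem lemma1 (d d' : nat) (X A Y B : finType)
    (M : A -> X -> 'M[algC]_d.+1) (N : B -> Y -> 'M[algC]_d'.+1)
    (x0 : X) (y0 : Y) :
  is_PMD M -> is_PMD N -> simple_PMD M -> simple_PMD N ->
  simulates M N /\ simulates N M.
Proof.
move=> pmdM pmdN simpleM simpleN; split.
- exact: simulates_simple_PMD x0 pmdM simpleN.
- exact: simulates_simple_PMD y0 pmdN simpleM.
Qed.
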